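(* Let $(X_i)_{i\in I}$ be a family of zero-dimensional coherent domains and $F\subseteq\prod_{i\in I}\mathcal V_{=1}(X_i)\subseteq\prod_{i\in I}\mathcal V(X_i)$ a finite set. Then $b(F)=\mathrm{conv}\,F$, where $b(F)=\overline{\mathrm{conv}\,F}\cap{\uparrow}\mathrm{conv}\,F$ computed in $\prod_{i\in I}\mathcal V(X_i)$; consequently $\mathrm{conv}\,F$ is Lawson-compact.
   Context: A domain is a continuous dcpo; it is coherent if the intersection of any two compact saturated subsets is compact; zero-dimensional means its (Scott) topology has a basis of clopens. $\mathcal V(X)$ is the set of continuous valuations on $X$ (strict, monotone, modular maps from Scott-opens to $[0,\infty]$ preserving directed unions), ordered pointwise and carrying pointwise addition and scaling; $\mathcal V_{=1}(X)$ those with $\mu(X)=1$. The product $\prod_i\mathcal V(X_i)$ has the componentwise order and operations. $\mathrm{conv}\,F$ is the set of finite convex combinations of elements of $F$, $\overline{A}$ the Scott closure, ${\uparrow}A$ the up-closure. The Lawson topology is generated by the Scott-open sets and the complements of principal up-sets ${\uparrow}x$. *)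

From HB Require Import structures.
From mathcomp Require Import all_boot all_order all_algebra.
From mathcomp Require Import boolp classical_sets functions cardinality reals constructive_ereal ereal.
Set Implicit Arguments. Unset Strict Implicit. Unset Printing Implicit Defensive.
Import Order.TTheory GRing.Theory Num.Theory.
Local Open Scope classical_set_scope.
Local Open Scope ring_scope.

Definition is_poset {T : Type} (le : T -> T -> Prop) : Prop :=
  (forall x, le x x) /\ (forall x y z, le x y -> le y z -> le x z) /\
  (forall x y, le x y -> le y x -> x = y).

Definition upper_set {T : Type} (le : T -> T -> Prop) (A : set T) : Prop :=
  forall x y, A x -> le x y -> A y.

Definition directed {T : Type} (le : T -> T -> Prop) (D : set T) : Prop :=
  (exists x, D x) /\
  (forall x y, D x -> D y -> exists z, D z /\ le x z /\ le y z).

Definition is_lub {T : Type} (le : T -> T -> Prop) (D : set T) (s : T) : Prop :=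
  (forall d, D d -> le d s) /\ (forall u, (forall d, D d -> le d u) -> le s u).

Definition dcpo {T : Type} (le : T -> T -> Prop) : Prop :=
  is_poset le /\ (forall D, directed le D -> exists s, is_lub le D s).

Definition way_below {T : Type} (le : T -> T -> Prop) (x y : T) : Prop :=
  forall D s, directed le D -> is_lub le D s -> le y s -> exists d, D d /\ le x d.

Definition cont_domain {T : Type} (le : T -> T -> Prop) : Prop :=
  dcpo le /\
  (forall y, directed le (fun x => way_below le x y) /\
             is_lub le (fun x => way_below le x y) y).

Definition scott_open {T : Type} (le : T -> T -> Prop) (U : set T) : Prop :=
  upper_set le U /\
  (forall D s, directed le D -> is_lub le D s -> U s -> exists d, D d /\ U d).

Definition compact_wrt {T : Type} (op : set T -> Prop) (K : set T) : Prop :=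
  forall G : set (set T), (forall U, G U -> op U) ->
    K `<=` \bigcup_(U in G) U ->
    exists (n : nat) (f : nat -> set T),
      (forall k, (k < n)%N -> G (f k)) /\
      K `<=` (fun x => exists k, (k < n)%N /\ f k x).

Definition saturated {T : Type} (le : T -> T -> Prop) (K : set T) : Prop :=
  forall x, K x <-> (forall U, scott_open le U -> K `<=` U -> U x).

Definition scott_coherent {T : Type} (le : T -> T -> Prop) : Prop :=
  forall K1 K2, saturated le K1 -> compact_wrt (scott_open le) K1 ->
    saturated le K2 -> compact_wrt (scott_open le) K2 ->
    compact_wrt (scott_open le) (K1 `&` K2).

Definition scott_zero_dimensional {T : Type} (le : T -> T -> Prop) : Prop :=
  forall U x, scott_open le U -> U x ->
    exists C, scott_open le C /\ scott_open le (~` C) /\ C x /\ C `<=` U.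

Definition opens {T : Type} (le : T -> T -> Prop) := {U : set T | scott_open le U}.

Definition valuation (R : realType) {T : Type} (le : T -> T -> Prop)
    (mu : opens le -> \bar R) : Prop :=
  (forall U, (0 <= mu U)%E) /\
  (forall U, sval U = set0 -> mu U = 0%E) /\
  (forall U V, sval U `<=` sval V -> (mu U <= mu V)%E) /\
  (forall U V W Z, sval W = sval U `|` sval V -> sval Z = sval U `&` sval V ->
      (mu U + mu V = mu W + mu Z)%E) /\
  (forall (D : set (opens le)) (W : opens le),
      directed (fun U V => sval U `<=` sval V) D ->
      sval W = \bigcup_(U in D) sval U ->
      mu W = ereal_sup (mu @` D)).

Definition prodV (R : realType) {I : Type} {X : I -> Type}
    (le : forall i, X i -> X i -> Prop) :=
  {nu : forall i, opens (le i) -> \bar R | forall i, @valuation R (X i) (le i) (nu i)}.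

Definition prod_le (R : realType) {I : Type} {X : I -> Type}
    {le : forall i, X i -> X i -> Prop} (a b : prodV R le) : Prop :=
  forall i U, (sval a i U <= sval b i U)%E.

Definition prob_prodV (R : realType) {I : Type} {X : I -> Type}
    {le : forall i, X i -> X i -> Prop} (nu : prodV R le) : Prop :=
  forall i (U : opens (le i)), sval U = setT -> sval nu i U = 1%E.

Definition conv (R : realType) {I : Type} {X : I -> Type}
    {le : forall i, X i -> X i -> Prop} (F : set (prodV R le)) : set (prodV R le) :=
  fun nu => exists (n : nat) (lam : 'I_n -> R) (f : 'I_n -> prodV R le),
    (forall k, F (f k)) /\ (forall k, 0 <= lam k) /\ \sum_(k < n) lam k = 1 /\
    (forall i U, sval nu i U = (\sum_(k < n) (lam k)%:E * sval (f k) i U)%E).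

Definition scott_closure {T : Type} (le : T -> T -> Prop) (A : set T) : set T :=
  fun x => forall U, scott_open le U -> U x -> exists a, A a /\ U a.

Definition up_closure {T : Type} (le : T -> T -> Prop) (A : set T) : set T :=
  fun x => exists a, A a /\ le a x.

Definition bF (R : realType) {I : Type} {X : I -> Type}
    {le : forall i, X i -> X i -> Prop} (F : set (prodV R le)) : set (prodV R le) :=
  scott_closure (@prod_le R I X le) (conv F) `&` up_closure (@prod_le R I X le) (conv F).

Definition lawson_subbasic {T : Type} (le : T -> T -> Prop) (S : set T) : Prop :=
  scott_open le S \/ exists y, S = ~` (fun z => le y z).

Definition lawson_open {T : Type} (le : T -> T -> Prop) (U : set T) : Prop :=
  forall x, U x -> exists (n : nat) (f : nat -> set T),
    (forall k, (k < n)%N -> lawson_subbasic le (f k)) /\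
    (forall k, (k < n)%N -> f k x) /\
    (fun z => forall k, (k < n)%N -> f k z) `<=` U.

Definition lawson_compact {T : Type} (le : T -> T -> Prop) (K : set T) : Prop :=
  compact_wrt (lawson_open le) K.

(* An element x of b(F) lies above some a in conv F.  Since the sets
   {nu | 1 < nu_i(U)} are Scott-open (directed suprema of valuations are computed
   pointwise) and miss conv F, x is again a probability valuation.  For
   probability valuations a <= x and a clopen C, the identities
   a(C) + a(~C) = 1 = x(C) + x(~C) force a(C) = x(C); in a zero-dimensional space
   every open set is the directed union of the clopens it contains, so x = a.

   For Lawson compactness, conv F is the image of the standard simplex under
   v |-> sum_k v_k f_k, and this map is continuous into the Lawson topology: the
   image of v is the directed supremum of the images of v - eps, which handles
   Scott-open sets, and each value nu_i(U) of the image depends continuously on v,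
   which handles complements of principal up-sets. *)

From mathcomp Require Import all_boot all_order all_algebra finmap.
From mathcomp Require Import boolp classical_sets cardinality reals.
From mathcomp Require Import constructive_ereal ereal topology normedtype lra.

Set Implicit Arguments. Unset Strict Implicit. Unset Printing Implicit Defensive.
Import Order.TTheory GRing.Theory Num.Theory.
Import numFieldNormedType.Exports.
Local Open Scope classical_set_scope.
Local Open Scope ring_scope.

Section ScottOpen.
Variables (T : Type) (le : T -> T -> Prop).

Lemma scott_open_setT : scott_open le setT.
Proof. by split=> // D s [[d Dd] _] _ _; exists d. Qed.

Lemma scott_open_set0 : scott_open le set0.
Proof. by split. Qed.

Lemma scott_openU A B : scott_open le A -> scott_open le B -> scott_open le (A `|` B).
Proof.
move=> [uA dA] [uB dB]; split.
  by move=> x y [Ax|Bx] xy; [left; apply: uA Ax xy|right; apply: uB Bx xy].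
move=> D s dirD lubD [As|Bs].
  by have [d [Dd Ad]] := dA D s dirD lubD As; exists d; split=> //; left.
by have [d [Dd Bd]] := dB D s dirD lubD Bs; exists d; split=> //; right.
Qed.

Lemma scott_openI A B : scott_open le A -> scott_open le B -> scott_open le (A `&` B).
Proof.
move=> [uA dA] [uB dB]; split.
  by move=> x y [Ax Bx] xy; split; [apply: uA Ax xy|apply: uB Bx xy].
move=> D s dirD lubD [As Bs].
have [d1 [D1 A1]] := dA D s dirD lubD As.
have [d2 [D2 B2]] := dB D s dirD lubD Bs.
have [z [Dz [d1z d2z]]] := dirD.2 _ _ D1 D2.
by exists z; split=> //; split; [apply: uA A1 d1z|apply: uB B2 d2z].
Qed.

End ScottOpen.

Section DirectedSup.
Variable R : realType.
Local Open Scope ereal_scope.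

Lemma ereal_sup_addr_le (A : set (\bar R)) (c S : \bar R) :
  0 <= c -> (exists2 a, A a & 0 <= a) -> (forall a, A a -> a + c <= S) ->
  ereal_sup A + c <= S.
Proof.
move=> c0 [a0 Aa0 a00] AcS; case: c c0 AcS => [r| |] // c0 AcS.
- by rewrite -leeBrDr //; apply: ge_ereal_sup => a Aa; rewrite leeBrDr //; exact: AcS.
- have := AcS a0 Aa0; rewrite addey ?leye_eq; last by rewrite gt_eqF // (lt_le_trans _ a00).
  by move=> /eqP ->; rewrite leey.
Qed.

Variables (J : Type) (D : set J) (ord : J -> J -> Prop).
Hypothesis D0 : exists d, D d.
Hypothesis dirD : forall x y, D x -> D y -> exists z, D z /\ ord x z /\ ord y z.

Lemma ereal_sup_directed_add (f g : J -> \bar R) :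
  (forall x y, ord x y -> f x <= f y) -> (forall x y, ord x y -> g x <= g y) ->
  (forall x, D x -> 0 <= f x) -> (forall x, D x -> 0 <= g x) ->
  ereal_sup [set f d + g d | d in D] = ereal_sup (f @` D) + ereal_sup (g @` D).
Proof.
have [d0 Dd0] := D0; move=> fmono gmono f0 g0; apply/le_anti/andP; split.
  by apply: ge_ereal_sup => _ [d Dd <-]; apply: leeD; apply: ereal_sup_ubound; exists d.
rewrite addeC; apply: ereal_sup_addr_le.
- by apply: le_trans (f0 _ Dd0) _; apply: ereal_sup_ubound; exists d0.
- by exists (g d0); [exists d0|exact: g0].
move=> _ [d2 Dd2 <-]; rewrite addeC; apply: ereal_sup_addr_le; first exact: g0.
  by exists (f d0); [exists d0|exact: f0].
move=> _ [d1 Dd1 <-]; have [z [Dz [d1z d2z]]] := dirD Dd1 Dd2.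
apply: le_trans (leeD (fmono _ _ d1z) (gmono _ _ d2z)) _.
by apply: ereal_sup_ubound; exists z.
Qed.

Lemma ereal_sup_directed_sum (m : nat) (f : 'I_m -> J -> \bar R) :
  (forall k x y, ord x y -> f k x <= f k y) -> (forall k x, D x -> 0 <= f k x) ->
  ereal_sup [set \sum_(k < m) f k d | d in D] = \sum_(k < m) ereal_sup (f k @` D).
Proof.
have [d0 Dd0] := D0; elim: m f => [|m IHm] f fmono f0.
  rewrite big_ord0; under eq_imagel do rewrite big_ord0.
  by rewrite ereal_sup_cst //; apply/set0P; exists d0.
rewrite big_ord_recr /=; under eq_imagel do rewrite big_ord_recr /=.
rewrite -(IHm (fun k => f (widen_ord (leqnSn m) k))) => [|k|k]; last 2 first.
- by move=> x y; apply: fmono.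
- by move=> x; apply: f0.
apply: ereal_sup_directed_add => //.
- by move=> x y xy; apply: lee_sum => k _; apply: fmono.
- by move=> x y; apply: fmono.
- by move=> x Dx; apply: sume_ge0 => k _; apply: f0.
- by move=> x; apply: f0.
Qed.

End DirectedSup.

Lemma ereal_sup_comm (R : realType) (J K : Type) (A : set J) (B : set K)
    (k : J -> K -> \bar R) :
  ereal_sup [set ereal_sup [set k a b | b in B] | a in A] =
  ereal_sup [set ereal_sup [set k a b | a in A] | b in B].
Proof.
have sup_swap_le J' K' (A' : set J') (B' : set K') (k' : J' -> K' -> \bar R) :
    (ereal_sup [set ereal_sup [set k' a b | b in B'] | a in A'] <=
     ereal_sup [set ereal_sup [set k' a b | a in A'] | b in B'])%E.
  apply: ge_ereal_sup => _ [a Aa <-]; apply: ge_ereal_sup => _ [b Bb <-].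
  apply: (@le_trans _ _ (ereal_sup [set k' a' b | a' in A'])).
    by apply: ereal_sup_ubound; exists a.
  by apply: ereal_sup_ubound; exists b.
by apply/le_anti; rewrite sup_swap_le (sup_swap_le _ _ _ _ (fun b a => k a b)).
Qed.

Section Valuation.
Variables (R : realType) (T : Type) (le : T -> T -> Prop).
Local Open Scope ereal_scope.

Section Laws.
Variables (mu : opens le -> \bar R) (hmu : valuation mu).

Lemma valuation_ge0 U : 0 <= mu U.
Proof. by have [+ _] := hmu; apply. Qed.

Lemma valuation_set0 U : sval U = set0 -> mu U = 0.
Proof. by have [_ [+ _]] := hmu; apply. Qed.

Lemma valuation_le U V : sval U `<=` sval V -> mu U <= mu V.
Proof. by have [_ [_ [+ _]]] := hmu; apply. Qed.

Lemma valuation_modular U V W Z : sval W = sval U `|` sval V ->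
  sval Z = sval U `&` sval V -> mu U + mu V = mu W + mu Z.
Proof. by have [_ [_ [_ [+ _]]]] := hmu; apply. Qed.

Lemma valuation_directed_bigcup (D : set (opens le)) W :
  directed (fun U V => sval U `<=` sval V) D -> sval W = \bigcup_(U in D) sval U ->
  mu W = ereal_sup (mu @` D).
Proof. by have [_ [_ [_ [_]]]] := hmu; apply. Qed.

End Laws.

Lemma valuation_directed_sup (J : Type) (D : set J) (ord : J -> J -> Prop)
    (h : J -> opens le -> \bar R) :
  (exists d, D d) -> (forall x y, D x -> D y -> exists z, D z /\ ord x z /\ ord y z) ->
  (forall x y, ord x y -> forall U, h x U <= h y U) -> (forall d, D d -> valuation (h d)) ->
  valuation (fun U => ereal_sup [set h d U | d in D]).
Proof.
move=> [d0 Dd0] dirD hmono hval.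
have sup_ge0 U : 0 <= ereal_sup [set h d U | d in D].
  apply: le_trans (valuation_ge0 (hval _ Dd0) U) _.
  by apply: ereal_sup_ubound; exists d0.
split=> [//|]; split.
  move=> U U0; apply/le_anti; rewrite sup_ge0 andbT.
  by apply: ge_ereal_sup => _ [d Dd <-]; rewrite (valuation_set0 (hval _ Dd)).
split.
  move=> U V UV; apply: ge_ereal_sup => _ [d Dd <-].
  apply: le_trans (valuation_le (hval _ Dd) UV) _.
  by apply: ereal_sup_ubound; exists d.
split.
  move=> U V W Z eW eZ.
  have sup_add A B : ereal_sup [set h d A + h d B | d in D] =
      ereal_sup [set h d A | d in D] + ereal_sup [set h d B | d in D].
    apply: (ereal_sup_directed_add (ord := ord)) => //; first by exists d0.
    - by move=> x y /hmono.
    - by move=> x y /hmono.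
    - by move=> x /hval/valuation_ge0.
    - by move=> x /hval/valuation_ge0.
  rewrite -!sup_add; congr ereal_sup; apply: eq_imagel => d Dd.
  exact: (valuation_modular (hval _ Dd)).
move=> DD W dirDD eW.
rewrite (eq_imagel (fun d Dd => valuation_directed_bigcup (hval d Dd) dirDD eW)).
exact: ereal_sup_comm.
Qed.

Lemma valuation_nneg_comb (m : nat) (w : 'I_m -> R) (g : 'I_m -> opens le -> \bar R) :
  (forall k, (0 <= w k)%R) -> (forall k, valuation (g k)) ->
  valuation (fun U => \sum_(k < m) (w k)%:E * g k U).
Proof.
move=> w0 gval.
have wg_ge0 k U : 0 <= (w k)%:E * g k U.
  by rewrite mule_ge0 ?lee_fin ?(valuation_ge0 (gval k)).
split=> [U|]; first by apply: sume_ge0.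
split=> [U U0|]; first by apply: big1 => k _; rewrite (valuation_set0 (gval k)) ?mule0.
split=> [U V UV|].
  apply: lee_sum => k _; apply: lee_wpmul2l; rewrite ?lee_fin //.
  exact: (valuation_le (gval k)).
split=> [U V W Z eW eZ|].
  rewrite -!big_split /=; apply: eq_bigr => k _.
  by rewrite -!ge0_muleDr ?(valuation_ge0 (gval k)) ?(valuation_modular (gval k) eW eZ).
move=> DD W dirDD eW.
have [[U0 DDU0] _] := dirDD.
transitivity (\sum_(k < m) ereal_sup [set (w k)%:E * g k U | U in DD]).
  apply: eq_bigr => k _.
  rewrite (valuation_directed_bigcup (gval k) dirDD eW) -ereal_supZl ?image_comp //.
  by apply/set0P; exists (g k U0); exists U0.
rewrite (ereal_sup_directed_sum (ord := fun U V => sval U `<=` sval V)) //.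
- by exists U0.
- exact: dirDD.2.
- move=> k U V UV; apply: lee_wpmul2l; rewrite ?lee_fin //.
  exact: (valuation_le (gval k)).
Qed.

End Valuation.

Lemma lee_complement_eq (R : realType) (p q p' q' : \bar R) :
  (0 <= p)%E -> (0 <= q)%E -> (p <= p')%E -> (q <= q')%E ->
  (p' + q' = 1)%E -> (p + q = 1)%E -> p = p'.
Proof.
case: p => [p| |]; case: q => [q| |]; case: p' => [p'| |]; case: q' => [q'| |] //=;
  rewrite ?lee_fin ?leey ?leNye ?leye_eq ?leeNy_eq //; try by move=> *; discriminate.
by move=> ? ? ? ? [] ? [] ?; congr EFin; lra.
Qed.

Lemma max0_ge0 (R : realDomainType) (r : R) : 0 <= Num.max r 0.
Proof. by rewrite le_max lexx orbT. Qed.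

Lemma max0_le_add (R : realDomainType) (r s e : R) :
  0 <= e -> r <= s + e -> Num.max r 0 <= Num.max s 0 + e.
Proof. by rewrite /Num.max; case: ltrP; case: ltrP; lra. Qed.

Lemma ltr_div_succ (R : realFieldType) (e c : R) : 0 < e -> 0 <= c -> e / (c + 1) * c < e.
Proof. by move=> e0 c0; rewrite mulrAC ltr_pdivrMr ?ltr_wpDl // mulrDr mulr1 ltrDl. Qed.

Lemma lte_addr_small (R : realFieldType) (A c : R) (y : \bar R) :
  0 <= c -> (A%:E < y)%E -> exists2 e : R, 0 < e & ((A + e * c)%:E < y)%E.
Proof.
move=> c0; case: y => [r| |] Ar.
- rewrite lte_fin in Ar; have rA : 0 < r - A by rewrite subr_gt0.
  have c1 : 0 < c + 1 by lra.
  exists ((r - A) / (c + 1)); first by rewrite divr_gt0.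
  by rewrite lte_fin -ltrBrDl ltr_div_succ.
- by exists 1; rewrite ?ltry.
- by rewrite ltNge leNye in Ar.
Qed.

Lemma ball_row_coord (R : numFieldType) m (v w : 'rV[R]_m) e k :
  ball v e w -> `|v ord0 k - w ord0 k| < e.
Proof. by move=> [_ /(_ ord0 k)]. Qed.

Section Simplex.
Variables (R : realType) (m : nat).

Definition simplex : set 'rV[R]_m :=
  [set v | (forall k, 0 <= v ord0 k) /\ \sum_(k < m) v ord0 k = 1].

Lemma simplex_closed : closed simplex.
Proof.
have closed_ge0 k : closed [set v : 'rV[R]_m | 0 <= v ord0 k].
  apply: (preimage_closed (f := fun v : 'rV[R]_m => v ord0 k) _ (@closed_ge _ 0)) => v _.
  exact: coord_continuous.
have closed_sum1 : closed [set v : 'rV[R]_m | \sum_(k < m) v ord0 k = 1].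
  apply: (preimage_closed (f := fun v : 'rV[R]_m => \sum_(k < m) v ord0 k) _ (@closed_eq _ 1)).
  move=> v _.
  by apply: continuous_big => [|k _]; [exact: add_continuous|exact: coord_continuous].
have -> : simplex = \bigcap_(k in setT) [set v | 0 <= v ord0 k] `&`
                    [set v | \sum_(k < m) v ord0 k = 1].
  by apply/seteqP; split=> v [v0 v1]; split=> // k; [case|]; exact: v0.
exact: closedI (closed_bigI (fun k _ => closed_ge0 k)) closed_sum1.
Qed.

Lemma simplex_compact : compact simplex.
Proof.
have cube_compact : compact [set v : 'rV[R]_m | forall k, v ord0 k \in `[(0 : R), 1]].
  by apply: (@rV_compact _ _ (fun=> `[(0 : R), 1]%classic)) => _; exact: segment_compact.
apply: subclosed_compact simplex_closed cube_compact _ => v [v0 v1] k /=.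
rewrite in_itv /= v0 -v1 (bigD1 k) //= lerDl.
by apply: sumr_ge0 => j _; exact: v0.
Qed.

End Simplex.

Section CompactImage.
Variables (T : ptopologicalType) (P : Type) (h : T -> P).

Lemma nbhs_preimage_lawson_open (le : P -> P -> Prop) (v : T) (U : set P) :
  (forall S, lawson_subbasic le S -> S (h v) -> nbhs v (h @^-1` S)) ->
  lawson_open le U -> U (h v) -> nbhs v (h @^-1` U).
Proof.
move=> hsub Uopen Uhv; have [n [f [fsub [fhv fU]]]] := Uopen _ Uhv.
apply: filterS (fun w => fU (h w)) _.
elim: n fsub fhv {fU} => [|n IHn] fsub fhv; first by apply: filterS filterT => w _ [].
apply: filterS _ (filterI (IHn (fun k kn => fsub k (ltnW kn)) (fun k kn => fhv k (ltnW kn)))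
  (hsub _ (fsub n (ltnSn n)) (fhv n (ltnSn n)))).
by move=> w [wlt wn] k; rewrite ltnS leq_eqVlt => /orP[/eqP -> //|]; exact: wlt.
Qed.

Lemma compact_wrt_image (op : set P -> Prop) (K : set T) :
  compact K -> (forall U v, op U -> K v -> U (h v) -> nbhs v (h @^-1` U)) ->
  compact_wrt op (h @` K).
Proof.
rewrite compact_cover => Kcpt hcont G Gop hKG.
have KG : K `<=` cover G (fun U => interior (h @^-1` U)).
  move=> v Kv; have [U GU Uhv] := hKG _ (ex_intro2 _ _ v Kv erefl).
  by exists U => //; apply: hcont => //; exact: Gop.
have [G' G'G KG'] := Kcpt _ G _ (fun U _ => open_interior _) KG.
pose s := enum_fset G'; exists (size s), (nth set0 s); split.
  by move=> k ks; apply/set_mem/G'G/mem_nth.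
move=> _ [v Kv <-]; have [U G'U hU] := KG' v Kv.
by exists (index U s); rewrite index_mem nth_index //; split=> //; exact: nbhs_singleton hU.
Qed.

End CompactImage.

Lemma finite_set_range (T : Type) (A : set T) : finite_set A ->
  exists m (g : 'I_m -> T), A = range g.
Proof.
move=> [n /card_eqPle[/pfcard_geP[->|/surjfunPex[f ->]] _]].
  exists 0%N, (fun k : 'I_0 => False_rect T (Bool.diff_false_true (ltn_ord k))).
  by apply/seteqP; split=> // x [k]; case: k.
exists n, (fun k => f k); apply/seteqP; split=> [_ [k kn <-]|_ [k _ <-]].
  by exists (Ordinal kn).
by exists k => //; exact: ltn_ord.
Qed.

Unset Implicit Arguments.

Section ProductSpace.
Variables (R : realType) (I : Type) (X : I -> Type) (le : forall i, X i -> X i -> Prop).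
Local Notation P := (prodV R le).
Local Notation ple := (@prod_le R I X le).
Local Open Scope ereal_scope.

Definition opensT i : opens (le i) := exist _ setT (scott_open_setT (le i)).
Definition opens0 i : opens (le i) := exist _ set0 (scott_open_set0 (le i)).

Lemma prodV_ge0 (x : P) i U : 0 <= sval x i U.
Proof. exact: valuation_ge0 (svalP x i) U. Qed.

Lemma prodV_ext (x y : P) : (forall i U, sval x i U = sval y i U) -> x = y.
Proof.
case: x y => [x xval] [y yval] /= exy; apply: eq_exist.
by apply: functional_extensionality_dep => i; apply: funext => U.
Qed.

Definition prodV_dsup (D : set P) (dirD : directed ple D) : P :=
  exist (fun nu => forall i, valuation (nu i)) (fun i U => ereal_sup [set sval d i U | d in D])
    (fun i => valuation_directed_sup dirD.1 dirD.2 (fun x y xy => xy i) (fun d _ => svalP d i)).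

Lemma scott_open_prodV_gt i U (r : \bar R) : scott_open ple [set y | r < sval y i U].
Proof.
split=> [x y /= rx xy|D s dirD [_ lub_s] /= rs]; first exact: lt_le_trans rx (xy i U).
apply: contrapT => /forallNP Dle.
have sup_ub d : D d -> ple d (prodV_dsup D dirD).
  by move=> Dd j V; apply: ereal_sup_ubound; exists d.
suff : sval s i U <= r by rewrite leNgt rs.
apply: le_trans (lub_s _ sup_ub i U) _; apply: ge_ereal_sup => _ [d Dd <-].
by rewrite leNgt; apply/negP => rd; apply: (Dle d).
Qed.

Lemma conv_prob (F : set P) : (forall nu, F nu -> prob_prodV nu) ->
  forall c, conv F c -> prob_prodV c.
Proof.
move=> Fprob c [n [lam [f [Ff [_ [lam1 cE]]]]]] i U UT; rewrite cE.
under eq_bigr do rewrite (Fprob _ (Ff _) i U UT) mule1.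
by rewrite sumEFin lam1.
Qed.

Lemma prob_le_clopen_eq (a x : P) i (C : opens (le i)) :
  prob_prodV a -> prob_prodV x -> ple a x -> scott_open (le i) (~` sval C) ->
  sval x i C = sval a i C.
Proof.
move=> aprob xprob ax Cc; pose C' : opens (le i) := exist _ _ Cc.
have mass1 (y : P) : prob_prodV y -> sval y i C + sval y i C' = 1.
  move=> yprob; rewrite (valuation_modular (svalP y i) (W := opensT i) (Z := opens0 i)) /=.
  - by rewrite (yprob i (opensT i)) // (valuation_set0 (svalP y i) (U := opens0 i)) // adde0.
  - by rewrite setUCr.
  - by rewrite setICr.
apply/esym/(lee_complement_eq _ _ (ax i C) (ax i C') (mass1 x xprob) (mass1 a aprob));
  exact: prodV_ge0.
Qed.

Lemma prob_le_eq (a x : P) : (forall i, scott_zero_dimensional (le i)) ->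
  prob_prodV a -> prob_prodV x -> ple a x -> x = a.
Proof.
move=> zdim aprob xprob ax; apply: prodV_ext => i V.
pose DD := [set C : opens (le i) | scott_open (le i) (~` sval C) /\ sval C `<=` sval V].
have dirDD : directed (fun U V : opens (le i) => sval U `<=` sval V) DD.
  split; first by exists (opens0 i); split=> //=; rewrite setC0; exact: scott_open_setT.
  move=> C1 C2 [C1c C1V] [C2c C2V].
  exists (exist _ _ (scott_openU (svalP C1) (svalP C2))); split; last by split=> z /=; [left|right].
  split=> /=; first by rewrite setCU; apply: scott_openI.
  by move=> z [/C1V|/C2V].
have eV : sval V = \bigcup_(C in DD) sval C.
  apply/seteqP; split=> [z Vz|z [C [_ CV] /CV //]].
  by have [C [Co [Cc [Cz CV]]]] := zdim i _ z (svalP V) Vz; exists (exist _ C Co).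
rewrite (valuation_directed_bigcup (svalP x i) dirDD eV).
rewrite (valuation_directed_bigcup (svalP a i) dirDD eV).
by congr ereal_sup; apply: eq_imagel => C [Cc _]; apply: prob_le_clopen_eq.
Qed.

Lemma scott_closure_conv_le1 (F : set P) : (forall nu, F nu -> prob_prodV nu) ->
  forall x, scott_closure ple (conv F) x -> forall i U, sval x i U <= 1.
Proof.
move=> Fprob x xcl i U; apply: le_trans (valuation_le (svalP x i) (V := opensT i) _) _ => //.
rewrite leNgt; apply/negP => x1.
have [c [Fc /= c1]] := xcl _ (scott_open_prodV_gt i (opensT i) 1) x1.
by move: c1; rewrite (conv_prob _ Fprob _ Fc) ?ltxx.
Qed.

Lemma bF_conv (F : set P) : (forall i, scott_zero_dimensional (le i)) ->
  (forall nu, F nu -> prob_prodV nu) -> bF F = conv F.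
Proof.
move=> zdim Fprob; apply/seteqP; split=> [x [xcl [a [Fa ax]]]|x Fx]; last first.
  by split; [move=> U _ Ux; exists x|exists x; split=> // i U].
have aprob := conv_prob _ Fprob _ Fa.
suff -> : x = a by [].
apply: prob_le_eq => // i U UT; apply/le_anti.
by rewrite (scott_closure_conv_le1 _ Fprob _ xcl) -?(aprob i U UT) ?ax.
Qed.

End ProductSpace.

Section Mixture.
Variables (R : realType) (I : Type) (X : I -> Type) (le : forall i, X i -> X i -> Prop).
Local Notation P := (prodV R le).
Local Notation ple := (@prod_le R I X le).
Variables (m : nat) (g : 'I_m -> P).
Hypothesis gprob : forall k, prob_prodV (g k).

(* Clipping the weights at [0] extends the parametrisation of [conv F] by the
   simplex to all rows, so that it can be compared with its neighbours. *)
Definition mixture (v : 'rV[R]_m) : P :=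
  exist (fun nu => forall i, valuation (nu i))
    (fun i U => \sum_(k < m) (Num.max (v ord0 k) 0)%:E * sval (g k) i U)%E
    (fun i => valuation_nneg_comb (fun k => max0_ge0 _) (fun k => svalP (g k) i)).

Definition mass k i U : R := fine (sval (g k) i U).

Lemma mass_le1 k i U : (sval (g k) i U <= 1)%E.
Proof. by rewrite -(gprob k i (opensT _ _ le i)) //; apply: (valuation_le (svalP (g k) i)). Qed.

Lemma massE k i U : (mass k i U)%:E = sval (g k) i U.
Proof.
rewrite fineK // ge0_fin_numE ?prodV_ge0 //.
exact: le_lt_trans (mass_le1 k i U) (ltey 1).
Qed.

Lemma mixtureE v i U :
  sval (mixture v) i U = (\sum_(k < m) Num.max (v ord0 k) 0 * mass k i U)%:E.
Proof. by rewrite -sumEFin; apply: eq_bigr => k _; rewrite /= -massE. Qed.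

Lemma sum_mass_le i U : \sum_(k < m) mass k i U <= m%:R.
Proof.
rewrite -[m in m%:R]card_ord -sumr_const; apply: ler_sum => k _.
by rewrite -lee_fin massE mass_le1.
Qed.

Lemma mixture_le (v w : 'rV[R]_m) : (forall k, v ord0 k <= w ord0 k) -> ple (mixture v) (mixture w).
Proof.
move=> vw i U; rewrite !mixtureE lee_fin; apply: ler_sum => k _.
apply: ler_wpM2r; first by rewrite -lee_fin massE prodV_ge0.
by rewrite ge_max !le_max (vw k) lexx orbT.
Qed.

Lemma mixture_le_add (v w : 'rV[R]_m) (e : R) i U : 0 <= e ->
  (forall k, w ord0 k <= v ord0 k + e) ->
  (sval (mixture w) i U <= sval (mixture v) i U + (e * m%:R)%:E)%E.
Proof.
move=> e0 wve; rewrite !mixtureE -EFinD lee_fin.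
apply: le_trans (_ : \sum_(k < m) (Num.max (v ord0 k) 0 + e) * mass k i U <= _).
  apply: ler_sum => k _; apply: ler_wpM2r; first by rewrite -lee_fin massE prodV_ge0.
  exact: max0_le_add.
under eq_bigr do rewrite mulrDl; rewrite big_split /= -mulr_sumr lerD2l.
by rewrite ler_wpM2l // sum_mass_le.
Qed.

Lemma directed_mixture_shifts v :
  directed ple [set mixture (v - const_mx d) | d in [set d : R | 0 < d]].
Proof.
split; first by exists (mixture (v - const_mx 1)), 1; rewrite /= ?ltr01.
move=> _ _ [d1 d10 <-] [d2 d20 <-]; exists (mixture (v - const_mx (Num.min d1 d2))).
split; first by exists (Num.min d1 d2) => //; rewrite /= lt_min d10 d20.
by split; apply: mixture_le => k; rewrite !mxE lerD2l lerN2 ge_min lexx ?orbT.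
Qed.

Lemma is_lub_mixture_shifts v :
  is_lub ple [set mixture (v - const_mx d) | d in [set d : R | 0 < d]] (mixture v).
Proof.
split=> [_ [d d0 <-]|u ub i U].
  by apply: mixture_le => k; rewrite !mxE gerDl oppr_le0 ltW.
apply/lee_addgt0Pr => eps eps0; pose d := eps / (m%:R + 1).
have d0 : 0 < d by rewrite divr_gt0 // ltr_wpDl.
apply: le_trans (mixture_le_add (v - const_mx d) v d i U (ltW d0) _) _.
  by move=> k; rewrite !mxE subrK.
apply: leeD; first exact: ub _ (ex_intro2 _ _ d d0 erefl) i U.
by rewrite lee_fin ltW // ltr_div_succ.
Qed.

Lemma mixture_nbhs_scott_open v S : scott_open ple S -> S (mixture v) ->
  nbhs v (mixture @^-1` S).
Proof.
move=> [Sup Sinacc] Sv.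
have [_ [[d d0 <-] Sd]] := Sinacc _ _ (directed_mixture_shifts v) (is_lub_mixture_shifts v) Sv.
apply/nbhs_ballP; exists d => //= w /ball_row_coord vw; apply: Sup Sd _.
by apply: mixture_le => k; have := vw k; rewrite !mxE ltr_norml; lra.
Qed.

Lemma mixture_nbhs_not_above v y : ~ ple y (mixture v) ->
  nbhs v (mixture @^-1` (~` ple y)).
Proof.
move=> /existsNP[i /existsNP[U /negP]]; rewrite -ltNge mixtureE => yv.
have [e e0 ltye] := lte_addr_small (ler0n _ m) yv.
apply/nbhs_ballP; exists e => //= w /ball_row_coord vw /= /(_ i U); apply/negP; rewrite -ltNge.
apply: le_lt_trans (mixture_le_add v w e i U (ltW e0) _) _; last by rewrite mixtureE -EFinD.
by move=> k; have := vw k; rewrite ltr_norml; lra.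
Qed.

Lemma mixture_nbhs_subbasic v S : lawson_subbasic ple S -> S (mixture v) ->
  nbhs v (mixture @^-1` S).
Proof. by case=> [|[y ->]]; [exact: mixture_nbhs_scott_open|exact: mixture_nbhs_not_above]. Qed.

Lemma conv_range_mixture : conv (range g) = mixture @` @simplex R m.
Proof.
apply/seteqP; split=> [c [n [lam [f [Ff [lam0 [lam1 cE]]]]]]|_ [v [v0 v1] <-]].
  have [j fj] : {j : 'I_n -> 'I_m & forall k, g (j k) = f k}.
    by apply: (@choice _ _ (fun k j => g j = f k)) => k; have [j _ gjf] := Ff k; exists j.
  pose v : 'rV[R]_m := \row_l \sum_(k < n | j k == l) lam k.
  have v0 l : 0 <= v ord0 l by rewrite mxE; apply: sumr_ge0.
  exists v.
    split=> //; rewrite -lam1 (partition_big j xpredT) //=.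
    by apply: eq_bigr => l _; rewrite mxE.
  apply: prodV_ext => i U; rewrite cE /= (partition_big j xpredT) //=.
  apply: eq_bigr => l _; rewrite max_l ?v0 // mxE -sumEFin ge0_sume_distrl; last first.
    by move=> k _; rewrite lee_fin.
  by apply: eq_bigr => k /eqP <-; rewrite fj.
exists m, (fun k => v ord0 k), g; split=> [k|]; first by exists k.
by split=> //; split=> // i U /=; apply: eq_bigr => k _; rewrite max_l.
Qed.

End Mixture.

Theorem mainTheorem13 (R : realType) (I : Type) (X : I -> Type)
    (le : forall i, X i -> X i -> Prop)
    (Hdom : forall i, cont_domain (le i))
    (Hcoh : forall i, scott_coherent (le i))
    (Hzd : forall i, scott_zero_dimensional (le i))
    (F : set (prodV R le)) (Hfin : finite_set F)
    (Hprob : forall nu, F nu -> prob_prodV nu) :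
  bF F = conv F /\ lawson_compact (@prod_le R I X le) (conv F).
Proof.
(* Zero-dimensionality alone makes distinct probability valuations incomparable. *)
split; first exact: bF_conv.
have [m [g Fg]] := finite_set_range Hfin.
have gprob k : prob_prodV (g k) by apply: Hprob; rewrite Fg; exists k.
rewrite Fg conv_range_mixture.
apply: (compact_wrt_image (@simplex_compact R m)) => U v Uopen _.
apply: nbhs_preimage_lawson_open Uopen => S.
exact: mixture_nbhs_subbasic.
Qed.
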